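(* Fix $k\ge1$. For every $k$-bounded composition $\alpha$, $\chi(\mathbf{S}^{(k)}_\alpha)=s^{(k)}_{\lambda(\alpha)}$.
   Context: Compositions are finite sequences of positive integers (possibly empty $\emptyset$); $k$-bounded means all parts $\le k$; $\lambda(\alpha)$ is the partition obtained by sorting the parts of $\alpha$ decreasingly. $\mathsf{NSym}=\mathbb{Q}\langle H_1,H_2,\dots\rangle$ (noncommuting), $\mathsf{NSym}_{(k)}$ its subalgebra generated by $H_1,\dots,H_k$. $\chi:\mathsf{NSym}\to\mathsf{Sym}$ is the algebra homomorphism with $H_i\mapsto h_i$ (complete homogeneous symmetric function), so $\chi(H_{\alpha_1}\cdots H_{\alpha_m})=h_{\lambda(\alpha)}$. $k$-conjugation: hook length of cell $(i,j)$ of $\kappa$ is $\kappa_i-j+\kappa'_j-i+1$; a $(k+1)$-core has no cell of hook length $k+1$; $p(\kappa)$ has $i$-th part the number of cells in row $i$ with hook length $\le k$; $p$ is a bijection from $(k+1)$-cores to $k$-bounded partitions with inverse $c$; $\lambda^{\omega_k}=p(c(\lambda)')$. For $k$-bounded partitions $\mu\subseteq\lambda$, $\lambda/\mu$ is a horizontal $k$-strip if no two of its cells share a column, and $\mu^{\omega_k}\subseteq\lambda^{\omega_k}$ with no two cells of $\lambda^{\omega_k}/\mu^{\omega_k}$ in the same row; its size is $|\lambda|-|\mu|$. The $k$-Schur functions $\{s^{(k)}_\lambda\}_{\lambda\ k\text{-bounded}}$ are the basis of $\mathsf{Sym}_{(k)}=\mathbb{Q}[h_1,\dots,h_k]$ with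 $s^{(k)}_\emptyset=1$ and $h_i s^{(k)}_\lambda=\sum_\mu s^{(k)}_\mu$ for $1\le i\le k$, summed over $k$-bounded $\mu$ with $\mu/\lambda$ a horizontal $k$-strip of size $i$. Box-adding operators: $t_1(\alpha)=[1,\alpha_1,\dots,\alpha_m]$; for $i\ge2$, $t_i(\alpha)$ replaces the leftmost part of $\alpha$ equal to $i-1$ by $i$ (undefined if none). $\beta//\alpha$ is a horizontal composition strip of size $n$ if $\beta=t_{i_n}\cdots t_{i_1}(\alpha)$ with $1\le i_1<\cdots<i_n$; for $k$-bounded $\alpha,\beta$ it is a horizontal $k$-composition strip if moreover $\lambda(\beta)/\lambda(\alpha)$ is a horizontal $k$-strip. $\{\mathbf{S}^{(k)}_\alpha\}$ is the unique basis of $\mathsf{NSym}_{(k)}$ with $\mathbf{S}^{(k)}_\emptyset=1$ and $H_i\mathbf{S}^{(k)}_\alpha=\sum_\beta\mathbf{S}^{(k)}_\beta$ ($1\le i\le k$) over $\beta$ with $\beta//\alpha$ a horizontal $k$-composition strip of size $i$. *)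

From mathcomp Require Import all_boot all_order all_algebra.
From mathcomp Require Import boolp.
Set Implicit Arguments. Unset Strict Implicit. Unset Printing Implicit Defensive.
Import GRing.Theory.
Local Open Scope ring_scope.

Definition is_comp (a : seq nat) : bool := all (fun x => 0 < x)%N a.
Definition kcomp (k : nat) (a : seq nat) : bool := all (fun x => (0 < x <= k)%N) a.
Definition is_partition (l : seq nat) : bool := sorted geq l && is_comp l.
Definition kpart (k : nat) (l : seq nat) : bool := is_partition l && kcomp k l.

Definition lam (a : seq nat) : seq nat := sort geq a.

(* All compositions of n (fuel f >= n) *)
Fixpoint compsF (f n : nat) : seq (seq nat) :=
  match f with
  | 0 => if n == 0%N then [:: [::]] else [::]
  | f'.+1 => if n == 0%N then [:: [::]]
             else flatten [seq map (cons j) (compsF f' (n - j)) | j <- iota 1 n]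
  end.
Definition comps (n : nat) : seq (seq nat) := undup (compsF n n).
Definition kcomps (k n : nat) : seq (seq nat) := [seq a <- comps n | kcomp k a].
Definition kparts (k n : nat) : seq (seq nat) := [seq a <- comps n | kpart k a].

Definition conj (kap : seq nat) : seq nat :=
  [seq count (fun r => j < r)%N kap | j <- iota 0 (head 0%N kap)].

Definition is_cell (kap : seq nat) (i j : nat) : bool := (j < nth 0%N kap i)%N.

(* hook length of cell (i,j) (0-indexed): arm + leg + 1
   = kap_i - j + kap'_j - i + 1 in the paper's 1-indexed convention *)
Definition hook (kap : seq nat) (i j : nat) : nat :=
  ((nth 0%N kap i - j.+1) + (nth 0%N (conj kap) j - i.+1)).+1.

Definition is_core (k : nat) (kap : seq nat) : Prop :=
  is_partition kap /\ forall i j, is_cell kap i j -> hook kap i j <> k.+1.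

Definition pcore_map (k : nat) (kap : seq nat) : seq nat :=
  [seq x <- [seq count (fun j => hook kap i j <= k)%N (iota 0 (nth 0%N kap i))
            | i <- iota 0 (size kap)] | (0 < x)%N].

(* kconj k l w  <->  w = l^{omega_k} = p(c(l)'), where c(l) is the
   (k+1)-core kap with p(kap) = l *)
Definition kconj (k : nat) (l w : seq nat) : Prop :=
  exists kap, is_core k kap /\ pcore_map k kap = l /\ w = pcore_map k (conj kap).

Definition subpart (m l : seq nat) : Prop :=
  forall i, (nth 0%N m i <= nth 0%N l i)%N.

Definition in_skew (l m : seq nat) (i j : nat) : bool :=
  (nth 0%N m i <= j < nth 0%N l i)%N.

Definition hkstrip (k : nat) (l m : seq nat) (n : nat) : Prop :=
  [/\ kpart k m /\ kpart k l, subpart m l,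
      (forall i i' j, (i < i')%N -> in_skew l m i j -> in_skew l m i' j -> False),
      (exists lw mw, [/\ kconj k l lw, kconj k m mw, subpart mw lw &
          forall i j j', (j < j')%N -> in_skew lw mw i j -> in_skew lw mw i j' -> False])
    & sumn l = (sumn m + n)%N].

(* t_i(alpha); None when undefined *)
Definition tbox (i : nat) (a : seq nat) : option (seq nat) :=
  if i == 0%N then None
  else if i == 1%N then Some (1%N :: a)
  else if i.-1 \in a then Some (set_nth 0%N a (index i.-1 a) i)
  else None.

(* t_{i_n} ... t_{i_1}(alpha) for s = [:: i_1; ...; i_n] *)
Definition tboxes (s : seq nat) (a : seq nat) : option (seq nat) :=
  foldl (fun oa i => obind (tbox i) oa) (Some a) s.

Definition hcstrip (b a : seq nat) (n : nat) : Prop :=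
  exists s : seq nat, [/\ size s = n, sorted ltn s, all (fun i => 0 < i)%N s
                        & tboxes s a = Some b].

Definition hkcstrip (k : nat) (b a : seq nat) (n : nat) : Prop :=
  [/\ kcomp k a, kcomp k b, hcstrip b a n & hkstrip k (lam b) (lam a) n].

(* An element F of NSym is encoded by its coefficients F gamma on the
   basis H_gamma = H_{gamma_1}...H_{gamma_m} (gamma a composition);
   an element f of Sym = Q[h_1,h_2,...] by its coefficients f mu on the
   basis h_mu (mu a partition). *)
Definition NSym := seq nat -> rat.
Definition Sym := seq nat -> rat.

Definition in_NSymk (k : nat) (F : NSym) : Prop :=
  exists L : seq (seq nat), forall g, F g != 0 -> (g \in L) && kcomp k g.
(* Sym_(k) = Q[h_1..h_k]: finite support contained in k-bounded partitions *)
Definition in_Symk (k : nat) (f : Sym) : Prop :=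
  exists L : seq (seq nat), forall m, f m != 0 -> (m \in L) && kpart k m.

Definition oneN : NSym := fun g => (g == [::])%:R.
Definition oneS : Sym := fun m => (m == [::])%:R.

(* left multiplication by H_i: H_i H_gamma = H_{i :: gamma} *)
Definition Hmul (i : nat) (F : NSym) : NSym :=
  fun g => match g with
           | j :: g' => if j == i then F g' else 0
           | [::] => 0
           end.
(* multiplication by h_i: h_i h_nu = h_{nu u {i}} *)
Definition hmul (i : nat) (f : Sym) : Sym :=
  fun m => if is_partition m && (i \in m) then f (rem i m) else 0.

(* chi : NSym -> Sym, H_alpha |-> h_{lambda(alpha)}, extended linearly *)
Definition chi (F : NSym) : Sym :=
  fun m => if is_partition m then \sum_(a <- permutations m) F a else 0.

Definition is_basis (X Y : eqType) (V : (X -> rat) -> Prop) (Q : pred Y)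
    (b : Y -> X -> rat) : Prop :=
  [/\ (forall y, Q y -> V (b y)),
      (forall f, V f -> exists L : seq (rat * Y),
          all Q (map snd L) /\ forall x, f x = \sum_(p <- L) p.1 * b p.2 x)
    & (forall (L : seq Y) (c : Y -> rat), uniq L -> all Q L ->
          (forall x, \sum_(y <- L) c y * b y x = 0) ->
          forall y, y \in L -> c y = 0)].

Definition kSchur_family (k : nat) (s : seq nat -> Sym) : Prop :=
  [/\ is_basis (in_Symk k) (kpart k) s,
      s [::] =1 oneS
    & forall l i, kpart k l -> (1 <= i <= k)%N ->
        hmul i (s l) =1
        (fun x => \sum_(m <- kparts k (sumn l + i) | `[< hkstrip k m l i >]) s m x)].

Definition kSchurN_family (k : nat) (S : seq nat -> NSym) : Prop :=
  [/\ is_basis (in_NSymk k) (kcomp k) S,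
      S [::] =1 oneN
    & forall a i, kcomp k a -> (1 <= i <= k)%N ->
        Hmul i (S a) =1
        (fun x => \sum_(b <- kcomps k (sumn a + i) | `[< hkcstrip k b a i >]) S b x)].

From mathcomp Require Import all_boot all_order all_algebra.
From mathcomp Require Import boolp zify.
Set Implicit Arguments. Unset Strict Implicit. Unset Printing Implicit Defensive.
Import GRing.Theory.

(* Both bases obey Pieri rules of the same shape, so iterating them expresses
   H_g = \sum S_b and h_{lambda(g)} = \sum s_{lambda(b)} over the same family of
   chains b of strips.  The key combinatorial fact is that sorting b |-> lambda(b)
   is a bijection from the horizontal k-composition strips b//a of size i onto
   the horizontal k-strips mu/lambda(a) of size i: a horizontal strip is
   determined by the set of columns that grow, and applying the box-adding
   operators t_v for these columns v in increasing order realises it.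
   Expanding S_a first in the H_g and then back in the S-basis, linear
   independence forces the resulting expansion to be S_a itself; applying
   S_b |-> s_{lambda(b)} to it turns chi(S_a) into s_{lambda(a)}. *)

Lemma geqn_total : total geq.
Proof. by move=> a b; rewrite /= leq_total. Qed.

Lemma geqn_trans : transitive geq.
Proof. by move=> a b c /= ba cb; apply: leq_trans cb ba. Qed.

Lemma geqn_anti : antisymmetric geq.
Proof. by move=> a b /= ab; apply/eqP; rewrite eqn_leq andbC. Qed.

Lemma perm_lam a : perm_eq (lam a) a.
Proof. by rewrite /lam perm_sort. Qed.

Lemma sorted_lam a : sorted geq (lam a).
Proof. exact: sort_sorted geqn_total a. Qed.

Lemma sumn_lam a : sumn (lam a) = sumn a.
Proof. exact: perm_sumn (perm_lam a). Qed.

Lemma sorted_perm_lam x y : sorted geq x -> perm_eq x y -> x = lam y.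
Proof.
move=> sx pxy; rewrite -(sorted_sort geqn_trans sx).
exact/(perm_sortP geqn_total geqn_trans geqn_anti).
Qed.

Lemma perm_partitionE m g : is_partition m -> perm_eq g m = (m == lam g).
Proof.
case/andP=> sm _; apply/idP/eqP => [pgm|->]; last by rewrite perm_sym perm_lam.
by apply: sorted_perm_lam; rewrite // perm_sym.
Qed.

Lemma kcomp_comp k a : kcomp k a -> is_comp a.
Proof. by move=> ka; apply/allP=> x /(allP ka) /andP[]. Qed.

Lemma kpart_comp k l : kpart k l -> is_comp l.
Proof. by case/andP=> /andP[]. Qed.

Lemma partition_lam a : is_comp a -> is_partition (lam a).
Proof. by move=> ca; rewrite /is_partition sorted_lam /is_comp (perm_all _ (perm_lam a)). Qed.

Lemma kpart_lam k a : kcomp k a -> kpart k (lam a).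
Proof.
move=> ka; rewrite /kpart partition_lam ?(kcomp_comp ka) //.
by rewrite /kcomp (perm_all _ (perm_lam a)).
Qed.

Lemma rem_lam (i : nat) (g m : seq nat) : sorted geq m ->
  (i \in m) && (rem i m == lam g) = (m == lam (i :: g)).
Proof.
move=> sm; apply/andP/eqP => [[im /eqP rem_m]|->].
  apply: sorted_perm_lam => //; apply: perm_trans (perm_to_rem im) _.
  by rewrite perm_cons rem_m perm_lam.
have im : i \in lam (i :: g) by rewrite (perm_mem (perm_lam _)) mem_head.
split=> //; apply/eqP; apply: sorted_perm_lam.
  exact: (subseq_sorted geqn_trans (rem_subseq i (lam (i :: g))) (sorted_lam (i :: g))).
by rewrite -(perm_cons i) -(permPl (perm_to_rem im)) perm_lam.
Qed.

Lemma compsF_complete a f : is_comp a -> sumn a <= f -> a \in compsF f (sumn a).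
Proof.
elim: a f => [|x a IH] [|f] //= /andP[x0 ca]; first by rewrite leqn0 addn_eq0 eqn0Ngt x0.
move=> af; rewrite addn_eq0 eqn0Ngt x0 /=; apply/flatten_mapP; exists x.
  by rewrite mem_iota x0 /= add1n ltnS leq_addr.
by rewrite addKn map_f // IH //; lia.
Qed.

Lemma mem_comps a : is_comp a -> a \in comps (sumn a).
Proof. by move=> ca; rewrite mem_undup compsF_complete. Qed.

Lemma tbox_count_mem j a b v : tbox j a = Some b -> 0 < v ->
  count_mem v b + (v.+1 == j) = count_mem v a + (v == j).
Proof.
rewrite /tbox; case: eqP => // j0; case: eqP => [-> [<-] v0|j1].
  by rewrite /= [1 == v]eq_sym; case: (v =P 1) => //=; lia.
case: ifP => // ja [<-] _; rewrite count_set_nth_ltn ?index_mem // nth_index //=.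
have : 0 < count_mem j.-1 a by rewrite -has_count has_pred1.
have -> : (v.+1 == j) = (j.-1 == v) by apply/eqP/eqP; lia.
rewrite [j == v]eq_sym; case: (j.-1 =P v) => [<-|]; case: (j.-1 =P j) => //=; lia.
Qed.

Lemma comp_tbox j a b : is_comp a -> tbox j a = Some b -> is_comp b.
Proof.
rewrite /tbox; case: eqP => // j0; case: eqP => [_ ca [<-] //|_].
case: ifP => // ja /allP ca [<-]; rewrite set_nthE index_mem ja.
apply/allP => x; rewrite mem_cat in_cons => /or3P[/mem_take|/eqP->|/mem_drop]; auto.
by rewrite lt0n; apply/eqP.
Qed.

Lemma tboxes_rcons s j a : tboxes (rcons s j) a = obind (tbox j) (tboxes s a).
Proof. by rewrite /tboxes foldl_rcons. Qed.

Lemma tboxes_count_mem s a b v : tboxes s a = Some b -> 0 < v ->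
  count_mem v b + count_mem v.+1 s = count_mem v a + count_mem v s.
Proof.
elim/last_ind: s b => [|s j IH] b; first by move=> [<-].
rewrite tboxes_rcons; case e: (tboxes s a) => [b'|] //= bj v0.
have := tbox_count_mem bj v0; have := IH _ e v0.
by rewrite -!cats1 !count_cat /= !addn0; lia.
Qed.

Lemma comp_tboxes s a b : is_comp a -> tboxes s a = Some b -> is_comp b.
Proof.
move=> ca; elim/last_ind: s b => [|s j IH] b; first by move=> [<-].
rewrite tboxes_rcons; case e: (tboxes s a) => [b'|] //=.
exact: comp_tbox (IH _ e).
Qed.

(* Each t_c with c > 1 needs a part c - 1, either already in a or created by the
   earlier operator t_{c-1}. *)
Lemma tboxes_defined (s a : seq nat) : sorted ltn s -> is_comp s ->
  (forall c, c \in s -> 1 < c -> (c.-1 \in a) || (c.-1 \in s)) ->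
  exists b, tboxes s a = Some b.
Proof.
elim/last_ind: s => [|s j IH] ss ps hc; first by exists a.
move: ss; rewrite (sorted_pairwise ltn_trans) -{1}cats1 pairwise_cat allrel1r /= andbT.
case/andP=> /allP ltj; rewrite -(sorted_pairwise ltn_trans) => ss.
move: ps; rewrite /is_comp all_rcons => /andP[j0 ps].
have [b' e] : exists b, tboxes s a = Some b.
  apply: IH => // c cs c1; have := hc c; rewrite mem_rcons in_cons cs orbT.
  move=> /(_ isT c1); rewrite mem_rcons in_cons.
  by case: (c.-1 =P j) => [|_] //=; have := ltj c cs; lia.
rewrite tboxes_rcons e /= /tbox (gtn_eqF j0).
case: (j =P 1) => [_|j1]; first by eauto.
suff -> : j.-1 \in b' by eauto.
have j1' : 1 < j by lia.
have := tboxes_count_mem e (_ : 0 < j.-1); rewrite prednK // => /(_ ltac:(lia)).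
have -> : count_mem j s = 0 by apply/count_memPn/negP => /ltj; rewrite ltnn.
have := hc j; rewrite mem_rcons mem_head => /(_ isT j1').
rewrite mem_rcons in_cons; case: (j.-1 =P j) => [|_ /=]; first lia.
rewrite -!has_pred1 !has_count addn0 => h1 h2.
by rewrite h2 addn_gt0; case/orP: h1 => ->; rewrite ?orbT.
Qed.

Lemma leq_sumn (x : nat) s : x \in s -> x <= sumn s.
Proof. by elim: s => //= y s IH; rewrite in_cons => /predU1P[->|/IH]; lia. Qed.

Lemma hcstrip_perm_inj a b1 b2 n1 n2 :
  hcstrip b1 a n1 -> hcstrip b2 a n2 -> perm_eq b1 b2 -> b1 = b2.
Proof.
case=> s1 [_ ss1 ps1 e1] [s2 [_ ss2 ps2 e2]] /permP pb.
suff eq_s : s1 = s2 by move: e1; rewrite eq_s e2 => -[].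
have count_shift v : 0 < v ->
    count_mem v s1 + count_mem v.+1 s2 = count_mem v s2 + count_mem v.+1 s1.
  move=> v0; have := tboxes_count_mem e1 v0; have := tboxes_count_mem e2 v0.
  by rewrite -(pb (pred1 v)); lia.
(* descending induction from a value exceeding every part of s1 and s2 *)
have count_eq d v : 0 < v -> sumn s1 + sumn s2 < v + d ->
    count_mem v s1 = count_mem v s2.
  elim: d v => [|d IH] v v0 hv.
    by rewrite !(count_memPn _) //; apply/negP => /leq_sumn; lia.
  by have := IH v.+1 isT ltac:(lia); have := count_shift v v0; lia.
apply: (irr_sorted_eq ltn_trans ltnn) => // v; case: (posnP v) => [->|v0].
  by apply/idP/idP => [/(allP ps1)|/(allP ps2)].
by rewrite -!has_pred1 !has_count (count_eq (sumn s1 + sumn s2).+1 v v0) //; lia.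
Qed.

Definition colsize (v : nat) (l : seq nat) : nat := count (fun x => v <= x) l.

Lemma colsize_split v l : colsize v l = count_mem v l + colsize v.+1 l.
Proof.
rewrite /colsize; elim: l => //= x l ->.
by case: (ltngtP x v) => [xv|vx|xv]; rewrite ?xv ?eqxx ?(gtn_eqF xv) ?(ltn_eqF vx) /=; lia.
Qed.

Lemma perm_colsize v l l' : perm_eq l l' -> colsize v l = colsize v l'.
Proof. by rewrite /colsize => /permP->. Qed.

Lemma colsize_out K l v : all (fun x => x <= K) l -> K < v -> colsize v l = 0.
Proof.
move=> lK Kv; apply/eqP; rewrite -leqn0 leqNgt -has_count.
by apply/hasP => -[x /(allP lK) /=]; lia.
Qed.

Lemma colsize_rows v l n : 0 < v -> size l <= n ->
  colsize v l = count (fun r => v <= nth 0 l r) (iota 0 n).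
Proof.
move=> v0 ln; rewrite -(subnKC ln) iotaD count_cat add0n.
have -> : count (fun r => v <= nth 0 l r) (iota (size l) (n - size l)) = 0.
  apply/eqP; rewrite -leqn0 leqNgt -has_count; apply/hasP => -[r].
  by rewrite mem_iota => /andP[lr _]; rewrite nth_default // leqNgt v0.
by rewrite addn0 /colsize -{1}(mkseq_nth 0 l) /mkseq count_map.
Qed.

Lemma sum_iota_leq x K : x <= K -> \sum_(v <- iota 1 K) (v <= x) = x.
Proof.
move=> xK; rewrite -(subnKC xK) iotaD big_cat /= [X in _ + X]big1_seq ?addn0.
  rewrite (eq_big_seq (fun => 1)) ?sum1_size ?size_iota // => v.
  by rewrite mem_iota => /andP[_]; lia.
by move=> v /andP[_]; rewrite mem_iota => /andP[xv _]; apply/eqP; rewrite eqb0 -ltnNge; lia.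
Qed.

Lemma sumn_colsize K l : all (fun x => x <= K) l -> sumn l = \sum_(v <- iota 1 K) colsize v l.
Proof.
elim: l => [_|x l IH /= /andP[xK lK]]; first by rewrite big1_seq.
by rewrite /colsize /= big_split /= -IH // sum_iota_leq.
Qed.

Lemma count_leq_predD (T : Type) (a b : pred T) s :
  count a s <= count b s + count (predD a b) s.
Proof. by elim: s => //= x s IH; case: (a x); case: (b x) => /=; lia. Qed.

(* No two cells of l/m share a column: at most one row r of l reaches
   column v without m reaching it. *)
Lemma hkstrip_colsize k l m n v : hkstrip k l m n -> 0 < v ->
  colsize v m <= colsize v l <= (colsize v m).+1.
Proof.
case=> _ sub one_per_column _ _ v0; set N := size l + size m.
rewrite (@colsize_rows v m N) ?leq_addl // (@colsize_rows v l N) ?leq_addr //.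
apply/andP; split; first by apply: sub_count => r /= vm; apply: leq_trans vm (sub r).
apply: leq_trans (count_leq_predD _ (fun r => v <= nth 0 m r) _) _.
rewrite -addn1 leq_add2l -size_filter.
set p := predD _ _.
have: sorted ltn [seq r <- iota 0 N | p r].
  by apply: sorted_filter; [apply: ltn_trans | apply: iota_ltn_sorted].
have mem_p r : r \in [seq r <- iota 0 N | p r] -> in_skew l m r v.-1.
  by rewrite mem_filter /p /in_skew /= -ltnNge => /andP[/andP[? ?] _]; lia.
case: [seq r <- iota 0 N | p r] mem_p => [|x [|y t]] //= mem_p /andP[xy _].
by case: (one_per_column x y v.-1 xy); apply: mem_p; rewrite !inE eqxx ?orbT.
Qed.

Section StripFromColumns.

Variables (K : nat) (a l : seq nat).
Hypotheses (ca : is_comp a) (cl : is_comp l).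
Hypotheses (aK : all (fun x => x <= K) a) (lK : all (fun x => x <= K) l).
Hypothesis col_step : forall v, 0 < v -> colsize v a <= colsize v l <= (colsize v a).+1.

(* The columns in which l has one more cell than a: the box-adding operators
   t_v, v in increasing order, build l from a. *)
Let grow := [seq v <- iota 1 K | colsize v a < colsize v l].

Let sorted_grow : sorted ltn grow.
Proof. by apply: sorted_filter; [apply: ltn_trans | apply: iota_ltn_sorted]. Qed.

Let mem_grow v : 0 < v -> (v \in grow : nat) = colsize v l - colsize v a.
Proof.
move=> v0; rewrite mem_filter mem_iota; have := col_step v0.
case: (leqP v K) => vK; first by rewrite v0 add1n ltnS vK andbT; case: ltnP => /=; lia.
by rewrite (colsize_out lK vK) (colsize_out aK vK) add1n ltnS (leqNgt v K) vK andbF.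
Qed.

Let grow_defined : exists b, tboxes grow a = Some b.
Proof.
apply: tboxes_defined => //; first by apply/allP => v; rewrite mem_filter mem_iota => /and3P[].
move=> c c_grow c1; apply/orP; case: (boolP (c.-1 \in grow)) => [|c'_grow]; [by right | left].
have := mem_grow (_ : 0 < c); have := mem_grow (_ : 0 < c.-1).
rewrite c_grow (negbTE c'_grow) => /(_ ltac:(lia)) col_c' /(_ ltac:(lia)) col_c.
rewrite -has_pred1 has_count.
have := col_step (_ : 0 < c.-1); have := colsize_split c.-1 a; have := colsize_split c.-1 l.
by rewrite prednK; lia.
Qed.

Let perm_tboxes_grow b : tboxes grow a = Some b -> perm_eq l b.
Proof.
move=> ab; have cb := comp_tboxes ca ab; apply/allP => x _; apply/eqP.
case: (posnP x) => [->|x0].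
  have no0 c : is_comp c -> count_mem 0 c = 0.
    by move=> /allP c0; apply/count_memPn/negP => /c0.
  by rewrite !no0.
have ug : uniq grow by apply: sorted_uniq sorted_grow; [apply: ltn_trans | apply: ltnn].
have := tboxes_count_mem ab x0; rewrite !(count_uniq_mem _ ug) !mem_grow //.
have := col_step x0; have := col_step (ltn0Sn x).
have := colsize_split x a; have := colsize_split x l; lia.
Qed.

Let size_grow : size grow = sumn l - sumn a.
Proof.
rewrite (sumn_colsize lK) (sumn_colsize aK) size_filter -sum1_count big_mkcond /=.
have -> : \sum_(v <- iota 1 K) colsize v l =
          \sum_(v <- iota 1 K) (colsize v a + (colsize v a < colsize v l)).
  apply: eq_big_seq => v; rewrite mem_iota => /andP[v0 _].
  by have := col_step v0; case: ltnP => /=; lia.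
by rewrite big_split /= addKn; apply: eq_bigr => v _; case: ifP.
Qed.

Lemma hcstrip_of_colsize : exists2 b, hcstrip b a (sumn l - sumn a) & perm_eq l b.
Proof.
have [b ab] := grow_defined; exists b; last exact: perm_tboxes_grow.
by exists grow; split=> //; apply/allP => v; rewrite mem_filter mem_iota => /and3P[].
Qed.

End StripFromColumns.

Lemma hkstrip_hcstrip k a i mu : kcomp k a -> hkstrip k mu (lam a) i ->
  exists2 b, hcstrip b a i & lam b = mu.
Proof.
move=> ka hs; have [[kla kmu] _ _ _ sum_mu] := hs.
have le_k l : kpart k l -> all (fun x => x <= k) l.
  by case/andP=> _ /allP kl; apply/allP => x /kl /andP[].
have ak : all (fun x => x <= k) a by rewrite -(perm_all _ (perm_lam a)) le_k.
have step v : 0 < v -> colsize v a <= colsize v mu <= (colsize v a).+1.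
  by move=> v0; rewrite -(perm_colsize v (perm_lam a)); apply: hkstrip_colsize hs v0.
have [b ab mu_b] := hcstrip_of_colsize (kcomp_comp ka) (kpart_comp kmu) ak (le_k _ kmu) step.
exists b; first by rewrite sum_mu sumn_lam addKn in ab.
by apply/esym/sorted_perm_lam => //; case/andP: kmu => /andP[].
Qed.

Definition strips k a i := [seq b <- kcomps k (sumn a + i) | `[< hkcstrip k b a i >]].

Lemma strips_lam k a i (F : seq nat -> rat) : kcomp k a ->
  (\sum_(b <- strips k a i) F (lam b) =
   \sum_(mu <- kparts k (sumn (lam a) + i) | `[< hkstrip k mu (lam a) i >]) F mu)%R.
Proof.
move=> ka; rewrite -(big_map lam predT F) -[RHS]big_filter.
apply/perm_big/uniq_perm.
- rewrite map_inj_in_uniq ?filter_uniq ?undup_uniq // => b1 b2; rewrite !mem_filter.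
  move=> /andP[/asboolP[_ _ h1 _] _] /andP[/asboolP[_ _ h2 _] _] lam_eq.
  apply: hcstrip_perm_inj h1 h2 _; rewrite -(permPl (perm_lam b1)) lam_eq.
  by rewrite perm_lam.
- by rewrite !filter_uniq ?undup_uniq.
move=> mu; apply/mapP/idP.
- case=> b; rewrite mem_filter => /andP[/asboolP[_ _ _ hs] _] ->.
  have [[_ kmu] _ _ _ sum_b] := hs; rewrite mem_filter; apply/andP; split.
    exact/asboolP.
  by rewrite mem_filter kmu /= -sum_b mem_comps ?(kpart_comp kmu).
rewrite mem_filter => /andP[/asboolP hs _]; have [[_ kmu] _ _ _ sum_mu] := hs.
have [b ab lam_b] := hkstrip_hcstrip ka hs; exists b => //.
have kb : kcomp k b by rewrite /kcomp -(perm_all _ (perm_lam b)) lam_b; case/andP: kmu.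
rewrite mem_filter; apply/andP; split; first by apply/asboolP; split; rewrite ?lam_b.
rewrite mem_filter kb /= -sumn_lam -sum_mu -lam_b sumn_lam.
exact: mem_comps (kcomp_comp kb).
Qed.

Local Open Scope ring_scope.

(* By the Pieri rules, H_g = \sum_(b <- kchains k g) S_b, and the end points
   are listed with multiplicity. *)
Definition kchains k (g : seq nat) : seq (seq nat) :=
  foldr (fun i C => flatten [seq strips k b i | b <- C]) [:: [::]] g.

Lemma big_kchains_cons k i g (F : seq nat -> rat) :
  \sum_(c <- kchains k (i :: g)) F c = \sum_(b <- kchains k g) \sum_(c <- strips k b i) F c.
Proof. by rewrite big_flatten big_map. Qed.

Lemma kcomp_kchains k g : all (kcomp k) (kchains k g).
Proof.
elim: g => //= i g IH; apply/allP => c /flatten_mapP[b _].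
by rewrite !mem_filter => /and3P[].
Qed.

Lemma kSchurN_kchains k S g : kSchurN_family k S -> kcomp k g ->
  forall x, \sum_(c <- kchains k g) S c x = (x == g)%:R.
Proof.
case=> _ S0 pieri; elim: g => [_ x|i g IH /= /andP[/andP[i0 ik] kg] x].
  by rewrite big_seq1 S0.
rewrite big_kchains_cons.
transitivity (\sum_(b <- kchains k g) Hmul i (S b) x).
  apply: eq_big_seq => b /(allP (kcomp_kchains k g)) kb.
  by rewrite pieri ?i0 // big_filter.
case: x => [|j x] /=; first by rewrite big1.
case: eqP => [->|ij]; first by rewrite IH // eqseq_cons eqxx.
by rewrite big1 // eqseq_cons; case: eqP.
Qed.

Lemma kSchur_kchains k s g : kSchur_family k s -> kcomp k g ->
  forall m, \sum_(c <- kchains k g) s (lam c) m = (m == lam g)%:R.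
Proof.
case=> _ s0 pieri; elim: g => [_ m|i g IH kig m]; first by rewrite big_seq1 s0.
have /andP[/andP[i0 ik] kg] := kig; rewrite big_kchains_cons.
transitivity (\sum_(b <- kchains k g) hmul i (s (lam b)) m).
  apply: eq_big_seq => b /(allP (kcomp_kchains k g)) kb.
  by rewrite pieri ?i0 ?kpart_lam // (strips_lam _ (fun mu => s mu m) kb).
rewrite /hmul; case: (boolP (is_partition m && (i \in m))) => [/andP[pm im]|not_im].
  by rewrite (IH kg) -(rem_lam _ _ (proj1 (andP pm))) im.
rewrite big1 //; case: eqP not_im => // ->.
by rewrite partition_lam ?(kcomp_comp kig) // (perm_mem (perm_lam _)) mem_head.
Qed.

Lemma big_pick (T : eqType) (G : seq T) (F : T -> rat) x : uniq G ->
  \sum_(g <- G) (x == g)%:R * F g = (x \in G)%:R * F x.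
Proof.
elim: G => [|y G IH] /=; first by rewrite big_nil mul0r.
case/andP=> yG uG; rewrite big_cons IH // in_cons.
case: (x =P y) => [->|_] /=; last by rewrite mul0r add0r.
by rewrite (negbTE yG) !mul1r mul0r addr0.
Qed.

Lemma big_support (T : eqType) (G : seq T) (F : T -> rat) x : uniq G ->
  (forall g, F g != 0 -> g \in G) -> \sum_(g <- G) (x == g)%:R * F g = F x.
Proof.
move=> uG supp; rewrite big_pick //; case: (boolP (x \in G)) => [_|xG]; first by rewrite mul1r.
by rewrite mul0r; apply/esym/eqP; apply: contraNT xG => /supp.
Qed.

Lemma big_regroup (T : eqType) (E : seq (rat * T)) (U : seq T) (h : T -> rat) :
  uniq U -> {subset map snd E <= U} ->
  \sum_(q <- E) q.1 * h q.2 = \sum_(y <- U) (\sum_(q <- E | q.2 == y) q.1) * h y.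
Proof.
move=> uU EU; under [RHS]eq_bigr => y _ do rewrite big_mkcond mulr_suml.
rewrite exchange_big /=; apply: eq_big_seq => q qE.
have qU : q.2 \in U by apply: EU; apply: map_f.
have := big_pick (fun y => q.1 * h y) q.2 uU; rewrite qU mul1r => <-.
by apply: eq_bigr => y _; case: (q.2 =P y) => [<-|_]; rewrite ?mul1r ?mul0r.
Qed.

(* Linear independence forces the coefficient of b_y in the expansion to be
   [y == a]. *)
Lemma basis_expansion_eval (X Y : eqType) (V : (X -> rat) -> Prop) (Q : pred Y)
    (b : Y -> X -> rat) (E : seq (rat * Y)) (a : Y) :
  is_basis V Q b -> Q a -> all Q (map snd E) ->
  (forall x, \sum_(q <- E) q.1 * b q.2 x = b a x) ->
  forall h : Y -> rat, \sum_(q <- E) q.1 * h q.2 = h a.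
Proof.
case=> _ _ indep Qa QE expand h; set U := undup (a :: map snd E).
have uU : uniq U by exact: undup_uniq.
have EU : {subset map snd E <= U} by move=> y yE; rewrite mem_undup in_cons yE orbT.
have aU : a \in U by rewrite mem_undup mem_head.
have coef y : y \in U -> \sum_(q <- E | q.2 == y) q.1 = (a == y)%:R.
  move=> yU; apply/eqP; rewrite -subr_eq0; apply/eqP; move: y yU.
  apply: (indep U (fun y => \sum_(q <- E | q.2 == y) q.1 - (a == y)%:R)) => //.
    by apply/allP => y; rewrite mem_undup in_cons => /predU1P[->|/(allP QE)].
  move=> x; under eq_bigr => y _ do rewrite mulrBl.
  by rewrite sumrB -big_regroup // expand big_pick // aU mul1r subrr.
rewrite (big_regroup h uU EU) big_seq (eq_bigr (fun y => (a == y)%:R * h y)).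
  by rewrite -big_seq big_pick // aU mul1r.
by move=> y yU; rewrite coef.
Qed.

Lemma chi_support (F : NSym) (G : seq (seq nat)) m : uniq G -> all is_comp G ->
  (forall g, F g != 0 -> g \in G) ->
  chi F m = \sum_(g <- G) F g * (m == lam g)%:R.
Proof.
move=> uG /allP cG supp; rewrite /chi; case: ifP => pm; last first.
  rewrite big1_seq // => g /andP[_ /cG cg]; case: eqP => [mg|]; last by rewrite mulr0.
  by rewrite mg partition_lam in pm.
under eq_bigr => c _ do rewrite -(big_support c uG supp).
rewrite exchange_big; apply: eq_bigr => g _; rewrite -mulr_suml mulrC; congr (_ * _).
rewrite -perm_partitionE // -mem_permutations.
have := big_pick (fun=> 1) g (permutations_uniq m); rewrite mulr1 => <-.
by apply: eq_bigr => c _; rewrite eq_sym mulr1.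
Qed.

Lemma NSymk_support k F : in_NSymk k F ->
  exists2 G, uniq G && all (kcomp k) G & forall g, F g != 0 -> g \in G.
Proof.
case=> L suppL; exists (undup [seq g <- L | kcomp k g]).
  by rewrite undup_uniq; apply/allP => g; rewrite mem_undup mem_filter => /andP[].
by move=> g /suppL /andP[gL kg]; rewrite mem_undup mem_filter kg.
Qed.

Theorem mainTheorem7 (k : nat) (s : seq nat -> Sym) (S : seq nat -> NSym) :
  (1 <= k)%N ->
  kSchur_family k s ->
  kSchurN_family k S ->
  forall alpha : seq nat, kcomp k alpha ->
    chi (S alpha) =1 s (lam alpha).
Proof.
move=> _ sF SF a ka m; have [basisS _ _] := SF; have [inV _ _] := basisS.
have [G /andP[uG /allP kG] supp] := NSymk_support (inV a ka).
pose E := flatten [seq [seq (S a g, c) | c <- kchains k g] | g <- G].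
have big_E (h : seq nat -> rat) :
    \sum_(q <- E) q.1 * h q.2 = \sum_(g <- G) S a g * \sum_(c <- kchains k g) h c.
  by rewrite big_flatten big_map; apply: eq_bigr => g _; rewrite big_map mulr_sumr.
have kE : all (kcomp k) (map snd E).
  apply/allP => _ /mapP[_ /flatten_mapP[g _ /mapP[c cg ->]] ->].
  exact: (allP (kcomp_kchains k g)).
have expand x : \sum_(q <- E) q.1 * S q.2 x = S a x.
  rewrite (big_E (S^~ x)) -(big_support x uG supp); apply: eq_big_seq => g /kG kg.
  by rewrite kSchurN_kchains // mulrC.
rewrite (chi_support m uG _ supp); last by apply/allP => g /kG /kcomp_comp.
rewrite -(basis_expansion_eval basisS ka kE expand (fun c => s (lam c) m)).
rewrite (big_E (fun c => s (lam c) m)).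
by apply: eq_big_seq => g /kG kg; rewrite kSchur_kchains.
Qed.
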